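(* Let $\mathfrak g=so(3)\oplus A_1$ be the real Lie algebra with basis $e_1,\dots,e_4$ and nonzero brackets $[e_1,e_2]=e_3$, $[e_2,e_3]=e_1$, $[e_3,e_1]=e_2$ ($e_4$ central). For $\varepsilon\in(0,1]$ let $K=\tfrac12\sqrt{4\varepsilon^4+1}$, $\theta_\pm=\sqrt{(2K\pm1)/(4K)}$, and $$U_\varepsilon=\begin{pmatrix}0&0&\varepsilon^2&0\\0&-\varepsilon^3&0&0\\0&0&0&\varepsilon\\-\varepsilon^2&0&-1&0\end{pmatrix},\quad W_\varepsilon=\begin{pmatrix}-\theta_-&0&0&\theta_+\\0&1&0&0\\0&0&1&0\\\theta_+&0&0&\theta_-\end{pmatrix},\quad \tilde W_\varepsilon=\begin{pmatrix}-\theta_-&0&-\theta_+&0\\0&-1&0&0\\0&0&0&1\\-\theta_+&0&\theta_-&0\end{pmatrix},$$ $D_\varepsilon=\mathrm{diag}(K+\tfrac12,\varepsilon^3,\varepsilon,K-\tfrac12)$. Then: (i) $U_\varepsilon=W_\varepsilon D_\varepsilon\tilde W_\varepsilon$, the matrices $W_\varepsilon,\tilde W_\varepsilon$ are orthogonal and converge as $\varepsilon\to0^+$ to nonsingular matrices $W_0,\tilde W_0$; (ii) the matrix $U_\varepsilon$ contracts $\mathfrak g$ to the algebra $A_{4.1}$ with nonzero brackets $[e_2,e_4]=e_1$, $[e_3,e_4]=e_2$; (iii) the matrix $\tilde U_\varepsilon=W_0D_\varepsilon\tilde W_0$ contracts $\mathfrak g$ to the algebra $A_{3.1}\oplus A_1$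 with only nonzero bracket $[e_2,e_4]=e_1$, which is not isomorphic to $A_{4.1}$.
   Context: A matrix-valued continuous function $U:(0,1]\to GL_4(\mathbb R)$ contracts a Lie algebra with structure constants $c_{ij}^k$ to the algebra with structure constants $\tilde c_{i'j'}^{k'}=\lim_{\varepsilon\to0^+}(U_\varepsilon)^i_{i'}(U_\varepsilon)^j_{j'}(U_\varepsilon^{-1})^{k'}_kc^k_{ij}$ (summation convention), provided all these limits exist; equivalently the new bracket is $\lim_{\varepsilon\to0^+}U_\varepsilon^{-1}[U_\varepsilon x,U_\varepsilon y]$. *)

(* R : realType, 4x4 matrices 'M[R]_4, indices 'I_4
   (basis vector e_{n+1} is index n). *)
From HB Require Import structures.
From mathcomp Require Import all_boot all_order all_algebra.
From mathcomp Require Import all_classical all_reals all_analysis.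
Set Implicit Arguments. Unset Strict Implicit. Unset Printing Implicit Defensive.
Import Order.TTheory GRing.Theory Num.Theory.
Import numFieldNormedType.Exports.
Local Open Scope ring_scope.
Local Open Scope classical_set_scope.

Definition mx4 {R : ringType} (l : seq (seq R)) : 'M[R]_4 :=
  \matrix_(i < 4, j < 4) nth 0 (nth [::] l i) j.

(* structure constants: c i j k = c^k_{ij}, i.e. [e_i, e_j] = sum_k c^k_{ij} e_k *)
Definition sconst (R : ringType) := 'I_4 -> 'I_4 -> 'I_4 -> R.

Definition c_so3A1 {R : ringType} : sconst R := fun i j k =>
  match nat_of_ord i, nat_of_ord j, nat_of_ord k with
  | 0%N, 1%N, 2%N => 1 | 1%N, 0%N, 2%N => -1
  | 1%N, 2%N, 0%N => 1 | 2%N, 1%N, 0%N => -1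
  | 2%N, 0%N, 1%N => 1 | 0%N, 2%N, 1%N => -1
  | _, _, _ => 0 end.

Definition c_A41 {R : ringType} : sconst R := fun i j k =>
  match nat_of_ord i, nat_of_ord j, nat_of_ord k with
  | 1%N, 3%N, 0%N => 1 | 3%N, 1%N, 0%N => -1
  | 2%N, 3%N, 1%N => 1 | 3%N, 2%N, 1%N => -1
  | _, _, _ => 0 end.

Definition c_A31A1 {R : ringType} : sconst R := fun i j k =>
  match nat_of_ord i, nat_of_ord j, nat_of_ord k with
  | 1%N, 3%N, 0%N => 1 | 3%N, 1%N, 0%N => -1
  | _, _, _ => 0 end.

Definition transform {R : comUnitRingType} (U : 'M[R]_4) (c : sconst R) : sconst R :=
  fun i' j' k' => \sum_(i < 4) \sum_(j < 4) \sum_(k < 4)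
      U i i' * U j j' * invmx U k' k * c i j k.

Definition contracts {R : realType} (U : R -> 'M[R]_4) (c c' : sconst R) : Prop :=
  (forall e : R, 0 < e <= 1 -> U e \in unitmx) /\
  (forall i' j' k' : 'I_4,
      (fun e => transform (U e) c i' j' k') @ 0^'+ --> c' i' j' k').

Definition lie_iso {R : comUnitRingType} (c c' : sconst R) : Prop :=
  exists P : 'M[R]_4, P \in unitmx /\ transform P c = c'.

Section Mats.
Variable R : realType.
Definition Kc (e : R) : R := Num.sqrt (4 * e ^+ 4 + 1) / 2.
Definition thp (e : R) : R := Num.sqrt ((2 * Kc e + 1) / (4 * Kc e)).
Definition thm (e : R) : R := Num.sqrt ((2 * Kc e - 1) / (4 * Kc e)).

Definition Umx (e : R) : 'M[R]_4 := mx4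
  [:: [:: 0; 0; e ^+ 2; 0];
      [:: 0; - e ^+ 3; 0; 0];
      [:: 0; 0; 0; e];
      [:: - e ^+ 2; 0; -1; 0]].
Definition Wmx (e : R) : 'M[R]_4 := mx4
  [:: [:: - thm e; 0; 0; thp e];
      [:: 0; 1; 0; 0];
      [:: 0; 0; 1; 0];
      [:: thp e; 0; 0; thm e]].
Definition Wtmx (e : R) : 'M[R]_4 := mx4
  [:: [:: - thm e; 0; - thp e; 0];
      [:: 0; -1; 0; 0];
      [:: 0; 0; 0; 1];
      [:: - thp e; 0; thm e; 0]].
Definition Dmx (e : R) : 'M[R]_4 := mx4
  [:: [:: Kc e + 1/2; 0; 0; 0];
      [:: 0; e ^+ 3; 0; 0];
      [:: 0; 0; e; 0];
      [:: 0; 0; 0; Kc e - 1/2]].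
End Mats.

From HB Require Import structures.
From mathcomp Require Import all_boot all_order all_algebra.
From mathcomp Require Import all_classical all_reals all_analysis.
From mathcomp Require Import ring lra.
Import Order.TTheory GRing.Theory Num.Theory.
Import numFieldNormedType.Exports.
Local Open Scope ring_scope.
Local Open Scope classical_set_scope.

(* Write so(3)+A_1 as the sum of its three elementary brackets. A change of basis U turns the
   elementary bracket [e_i, e_j] = e_k into structure constants that are a 2x2 minor of U times an
   entry of U^-1, so for explicit U and U^-1 everything is an explicit rational function of e.
   For U_e one gets A_{4.1} plus O(e^2) corrections; for the limit-frame matrix, whose entry
   K - 1/2 equals e^4/(K + 1/2), one gets (K + 1/2) times A_{3.1}+A_1 plus O(e^2) corrections.
   Part (i) reduces to th+^2 + th-^2 = 1, K (th+^2 - th-^2) = 1/2 and 2 K th+ th- = e^2, all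
   consequences of (K - 1/2)(K + 1/2) = e^4. *)

Definition o0 : 'I_4 := @Ordinal 4 0 isT.
Definition o1 : 'I_4 := @Ordinal 4 1 isT.
Definition o2 : 'I_4 := @Ordinal 4 2 isT.
Definition o3 : 'I_4 := @Ordinal 4 3 isT.

Section StructureConstants.
Context {R : comUnitRingType}.

Definition sc_delta (i j k : 'I_4) : sconst R := fun a b c =>
  [&& a == i, b == j & c == k]%:R.

Definition sc_add (c c' : sconst R) : sconst R := fun a b d => c a b d + c' a b d.
Definition sc_sub (c c' : sconst R) : sconst R := fun a b d => c a b d - c' a b d.

Definition sc_bracket (i j k : 'I_4) : sconst R := sc_sub (sc_delta i j k) (sc_delta j i k).

Lemma transformD (U : 'M[R]_4) (c c' : sconst R) i j k :
  transform U (sc_add c c') i j k =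
  transform U c i j k + transform U c' i j k.
Proof.
rewrite /transform -!big_split /=; apply: eq_bigr => a _.
rewrite -!big_split /=; apply: eq_bigr => b _.
rewrite -!big_split /=; apply: eq_bigr => d _; exact: mulrDr.
Qed.

Lemma transformB (U : 'M[R]_4) (c c' : sconst R) i j k :
  transform U (sc_sub c c') i j k =
  transform U c i j k - transform U c' i j k.
Proof.
rewrite /transform -!sumrB; apply: eq_bigr => a _.
rewrite -!sumrB; apply: eq_bigr => b _.
rewrite -!sumrB; apply: eq_bigr => d _; exact: mulrBr.
Qed.

Lemma sum_delta {n} (F : 'I_n -> R) i : \sum_a F a * (a == i)%:R = F i.
Proof.
rewrite (bigD1 i) //= eqxx mulr1 big1 ?addr0 // => a /negbTE ->; exact: mulr0.
Qed.

Lemma transform_delta (U : 'M[R]_4) i j k i' j' k' :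
  transform U (sc_delta i j k) i' j' k' = U i i' * U j j' * invmx U k' k.
Proof.
rewrite -(sum_delta (fun a => U a i' * U j j' * invmx U k' k) i).
apply: eq_bigr => a _.
rewrite -(sum_delta (fun b => U a i' * U b j' * invmx U k' k) j) mulr_suml.
apply: eq_bigr => b _.
rewrite -(sum_delta (fun c => U a i' * U b j' * invmx U k' c) k) !mulr_suml.
apply: eq_bigr => c _; rewrite /sc_delta.
by case: (a == i); case: (b == j); case: (c == k); rewrite /= ?mulr0 ?mulr1.
Qed.

Lemma transform_bracket (U : 'M[R]_4) i j k i' j' k' :
  transform U (sc_bracket i j k) i' j' k' =
  (U i i' * U j j' - U j i' * U i j') * invmx U k' k.
Proof. by rewrite transformB !transform_delta mulrBl. Qed.

Lemma c_so3A1E :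
  c_so3A1 = sc_add (sc_add (sc_bracket o0 o1 o2) (sc_bracket o1 o2 o0)) (sc_bracket o2 o0 o1).
Proof.
apply/funext => a; apply/funext => b; apply/funext => c.
move: a b c => [[|[|[|[|//]]]] ?] [[|[|[|[|//]]]] ?] [[|[|[|[|//]]]] ?].
all: by rewrite /c_so3A1 /sc_add /sc_bracket /sc_sub /sc_delta /=; ring.
Qed.

Lemma c_A31A1E : c_A31A1 = sc_bracket o1 o3 o0.
Proof.
apply/funext => a; apply/funext => b; apply/funext => c.
move: a b c => [[|[|[|[|//]]]] ?] [[|[|[|[|//]]]] ?] [[|[|[|[|//]]]] ?].
all: by rewrite /c_A31A1 /sc_bracket /sc_sub /sc_delta /=; ring.
Qed.

Lemma transform_so3A1 (U : 'M[R]_4) i j k :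
  transform U c_so3A1 i j k =
    (U o0 i * U o1 j - U o1 i * U o0 j) * invmx U k o2
  + (U o1 i * U o2 j - U o2 i * U o1 j) * invmx U k o0
  + (U o2 i * U o0 j - U o0 i * U o2 j) * invmx U k o1.
Proof. by rewrite c_so3A1E 2!transformD !transform_bracket. Qed.

Lemma mulmx1_invmx {U V : 'M[R]_4} : U *m V = 1%:M -> invmx U = V.
Proof.
move=> UV; have [Uu _] := mulmx1_unit UV.
by rewrite -[invmx U]mulmx1 -UV mulmxA mulVmx // mul1mx.
Qed.

(* Every bracket of A_{3.1}+A_1 is a multiple of e_1, so after any change of basis P all brackets
   are proportional to the single vector P^{-1} e_1; in A_{4.1} the brackets e_1 and e_2 are not. *)
Lemma c_A31A1_not_iso_A41 : ~ lie_iso c_A31A1 (@c_A41 R).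
Proof.
case=> P [_ /(congr1 (fun c => (c o1 o3 o0, c o1 o3 o1, c o2 o3 o1)))].
rewrite c_A31A1E !transform_bracket /c_A41 /=.
set x := _ - _; set w := _ - _; set y := invmx P o0 o0; set z := invmx P o1 o0.
case=> xy1 xz0 wz1.
have z0 : z = 0 by rewrite -[z]mul1r -xy1 mulrAC xz0 mul0r.
by move: wz1; rewrite z0 mulr0 => /eqP; rewrite eq_sym oner_eq0.
Qed.

End StructureConstants.

Section Decomposition.
Context {R : realType}.

Definition Wmx_of (p m : R) : 'M[R]_4 := mx4
  [:: [:: - m; 0; 0; p]; [:: 0; 1; 0; 0]; [:: 0; 0; 1; 0]; [:: p; 0; 0; m]].
Definition Wtmx_of (p m : R) : 'M[R]_4 := mx4
  [:: [:: - m; 0; - p; 0]; [:: 0; -1; 0; 0]; [:: 0; 0; 0; 1]; [:: - p; 0; m; 0]].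

Lemma Wmx_of_orthogonal {p m : R} : p ^+ 2 + m ^+ 2 = 1 -> Wmx_of p m *m (Wmx_of p m)^T = 1%:M.
Proof.
move=> pm; apply/matrixP => i j; rewrite !mxE !big_ord_recl big_ord0 !mxE.
by move: i j => [[|[|[|[|//]]]] ?] [[|[|[|[|//]]]] ?]; rewrite /= ?mxE /=; lra.
Qed.

Lemma Wtmx_of_orthogonal {p m : R} : p ^+ 2 + m ^+ 2 = 1 -> Wtmx_of p m *m (Wtmx_of p m)^T = 1%:M.
Proof.
move=> pm; apply/matrixP => i j; rewrite !mxE !big_ord_recl big_ord0 !mxE.
by move: i j => [[|[|[|[|//]]]] ?] [[|[|[|[|//]]]] ?]; rewrite /= ?mxE /=; lra.
Qed.

Lemma Kc_sqrB (e : R) : (Kc e - 1 / 2) * (Kc e + 1 / 2) = e ^+ 4.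
Proof.
have e4 : 0 <= e ^+ 4 by exact: exprn_even_ge0.
have : Num.sqrt (4 * e ^+ 4 + 1) ^+ 2 = 4 * e ^+ 4 + 1 by rewrite sqr_sqrtr //; lra.
rewrite /Kc; move: (Num.sqrt _) => s s2.
have -> : (s / 2 - 1 / 2) * (s / 2 + 1 / 2) = (s ^+ 2 - 1) / 4 by field.
by rewrite s2; field.
Qed.

Lemma Kc_ge_half (e : R) : 1 / 2 <= Kc e.
Proof.
have := Kc_sqrB e; have := exprn_even_ge0 e (isT : ~~ odd 4).
have : 0 <= Kc e by rewrite divr_ge0 ?sqrtr_ge0.
nra.
Qed.

Lemma Kc_gt0 (e : R) : 0 < Kc e.
Proof. by apply: lt_le_trans (Kc_ge_half e). Qed.

Lemma KcD_neq0 (e : R) : Kc e + 1 / 2 != 0.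
Proof. by rewrite gt_eqF // ltr_wpDl ?(ltW (Kc_gt0 e)). Qed.

Lemma sqr_theta (e s : R) : -1 <= s ->
  Num.sqrt ((2 * Kc e + s) / (4 * Kc e)) ^+ 2 = (2 * Kc e + s) / (4 * Kc e).
Proof.
move=> s1; have := Kc_ge_half e; have := Kc_gt0 e => K0 K1.
by rewrite sqr_sqrtr // divr_ge0 //; lra.
Qed.

Lemma sqr_thp (e : R) : thp e ^+ 2 = (2 * Kc e + 1) / (4 * Kc e).
Proof. by rewrite sqr_theta // lerN10 ler01. Qed.

Lemma sqr_thm (e : R) : thm e ^+ 2 = (2 * Kc e - 1) / (4 * Kc e).
Proof. exact: sqr_theta. Qed.

Lemma theta_sqrD (e : R) : thp e ^+ 2 + thm e ^+ 2 = 1.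
Proof. by rewrite sqr_thp sqr_thm; field; rewrite gt_eqF ?Kc_gt0. Qed.

Lemma theta_sqrB (e : R) : Kc e * (thp e ^+ 2 - thm e ^+ 2) = 1 / 2.
Proof. by rewrite sqr_thp sqr_thm; field; rewrite gt_eqF ?Kc_gt0. Qed.

Lemma theta_mul (e : R) : 2 * Kc e * thp e * thm e = e ^+ 2.
Proof.
have p0 : 0 <= thp e := sqrtr_ge0 _.
have m0 : 0 <= thm e := sqrtr_ge0 _.
have K0 := Kc_gt0 e.
have lhs0 : 0 <= 2 * Kc e * thp e * thm e by rewrite !mulr_ge0 ?(ltW K0).
apply/eqP; rewrite -(eqrXn2 (isT : 0 < 2)%N lhs0 (sqr_ge0 e)) -exprM -Kc_sqrB.
move: (sqr_thp e) (sqr_thm e) K0; move: (thp e) (thm e) (Kc e) => p m K p2 m2 K0.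
by rewrite !exprMn p2 m2; apply/eqP; field; rewrite gt_eqF.
Qed.

Lemma Umx_decomposition (e : R) : Umx e = Wmx e *m Dmx e *m Wtmx e.
Proof.
have := theta_sqrD e; have := theta_sqrB e; have := theta_mul e => pm sB sD.
apply/matrixP => i j; rewrite !mxE !big_ord_recl !big_ord0 !mxE ?big_ord_recl ?big_ord0 ?mxE.
by move: i j => [[|[|[|[|//]]]] ?] [[|[|[|[|//]]]] ?]; rewrite /= ?mxE /=; lra.
Qed.
End Decomposition.

Section Limits.
Context {R : realType}.

Lemma cvg_right0_eq {f g : R -> R} {l : R} :
  (forall e, 0 < e -> f e = g e) -> g @ 0^'+ --> l -> f @ 0^'+ --> l.
Proof.
move=> fg; apply: cvg_trans; apply: near_eq_cvg.
near=> e; apply/esym/fg; near: e; exact: nbhs_right_gt.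
Unshelve. all: by end_near.
Qed.

Lemma cvg_pow0 n : (fun e : R => e ^+ n.+1) @ 0^'+ --> 0.
Proof.
have := cvg_at_right_filter (@exprn_continuous R n.+1 0).
by rewrite expr0n.
Qed.

Lemma cvg_Kc : Kc (R:=R) @ 0^'+ --> (1 / 2 : R).
Proof.
have radicand : (fun e : R => 4 * e ^+ 4 + 1) @ 0^'+ --> (1 : R).
  rewrite -[X in _ --> X](_ : 4 * 0 + 1 = 1); last by rewrite mulr0 add0r.
  exact: cvgD (cvgM (cvg_cst _) (cvg_pow0 3)) (cvg_cst _).
rewrite -[X in _ --> X](_ : Num.sqrt 1 / 2 = 1 / 2); last by rewrite sqrtr1.
apply: cvgM (cvg_cst _).
by apply: continuous_cvg; [exact: sqrt_continuous | exact: radicand].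
Qed.

Lemma cvg_theta (s : R) :
  (fun e => Num.sqrt ((2 * Kc e + s) / (4 * Kc e))) @ 0^'+ --> Num.sqrt ((1 + s) / 2).
Proof.
apply: continuous_cvg; first exact: sqrt_continuous.
have -> : (1 + s) / 2 = (2 * (1 / 2) + s) / (4 * (1 / 2)) by field.
apply: cvgM; first exact: cvgD (cvgM (cvg_cst _) cvg_Kc) (cvg_cst _).
by apply: cvgV; [rewrite mulf_neq0 | exact: cvgM (cvg_cst _) cvg_Kc].
Qed.

Lemma cvg_thp : thp (R:=R) @ 0^'+ --> (1 : R).
Proof. by have := cvg_theta 1; rewrite divff // sqrtr1. Qed.

Lemma cvg_thm : thm (R:=R) @ 0^'+ --> (0 : R).
Proof. by have := cvg_theta (-1); rewrite subrr mul0r sqrtr0. Qed.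

Lemma cvg_Wmx_of {p m : R -> R} {p0 m0 : R} i j :
  p @ 0^'+ --> p0 -> m @ 0^'+ --> m0 ->
  (fun e => Wmx_of (p e) (m e) i j) @ 0^'+ --> Wmx_of p0 m0 i j.
Proof.
move=> pp mm; rewrite /Wmx_of /mx4 mxE; under eq_fun do rewrite mxE.
by move: i j => [[|[|[|[|//]]]] ?] [[|[|[|[|//]]]] ?];
  first [exact: cvg_cst | exact: pp | exact: mm | exact: cvgN pp | exact: cvgN mm].
Qed.

Lemma cvg_Wtmx_of {p m : R -> R} {p0 m0 : R} i j :
  p @ 0^'+ --> p0 -> m @ 0^'+ --> m0 ->
  (fun e => Wtmx_of (p e) (m e) i j) @ 0^'+ --> Wtmx_of p0 m0 i j.
Proof.
move=> pp mm; rewrite /Wtmx_of /mx4 mxE; under eq_fun do rewrite mxE.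
by move: i j => [[|[|[|[|//]]]] ?] [[|[|[|[|//]]]] ?];
  first [exact: cvg_cst | exact: pp | exact: mm | exact: cvgN pp | exact: cvgN mm].
Qed.

Lemma cvg_pow_div n {b : R -> R} {l : R} : l != 0 -> b @ 0^'+ --> l ->
  (fun e => e ^+ n.+1 / b e) @ 0^'+ --> 0.
Proof.
move=> l0 bl; rewrite -[X in _ --> X](mul0r l^-1).
exact: cvgM (cvg_pow0 n) (cvgV l0 bl).
Qed.

End Limits.

Section Contractions.
Context {R : realType}.

Definition Umx_inv (e : R) : 'M[R]_4 := mx4
  [:: [:: - (e ^+ 4)^-1; 0; 0; - (e ^+ 2)^-1];
      [:: 0; - (e ^+ 3)^-1; 0; 0];
      [:: (e ^+ 2)^-1; 0; 0; 0];
      [:: 0; 0; e^-1; 0]].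

Lemma Umx_mul_inv {e : R} : e != 0 -> Umx e *m Umx_inv e = 1%:M.
Proof.
move=> e0; apply/matrixP => i j; rewrite !mxE !big_ord_recl big_ord0 !mxE.
move: i j => [[|[|[|[|//]]]] ?] [[|[|[|[|//]]]] ?]; rewrite /= ?mxE /=.
all: by field; rewrite ?mulf_neq0 ?expf_neq0.
Qed.

Lemma transform_Umx (e : R) i j k : e != 0 ->
  transform (Umx e) c_so3A1 i j k =
  c_A41 i j k - e ^+ 2 * sc_bracket o1 o3 o2 i j k + e ^+ 4 * sc_bracket o1 o2 o3 i j k.
Proof.
move=> e0; rewrite transform_so3A1 (mulmx1_invmx (Umx_mul_inv e0)).
move: i j k => [[|[|[|[|//]]]] ?] [[|[|[|[|//]]]] ?] [[|[|[|[|//]]]] ?].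
all: rewrite !mxE /c_A41 /sc_bracket /sc_sub /sc_delta /=.
all: by field; rewrite ?mulf_neq0 ?expf_neq0.
Qed.

Lemma contracts_Umx : contracts (@Umx R) c_so3A1 c_A41.
Proof.
split=> [e /andP[e0 _]|i j k].
  exact: (mulmx1_unit (Umx_mul_inv (lt0r_neq0 e0))).1.
apply: (cvg_right0_eq (fun e e0 => transform_Umx e i j k (lt0r_neq0 e0))).
rewrite -[X in _ --> X](_ : c_A41 i j k - 0 * sc_bracket o1 o3 o2 i j k
  + 0 * sc_bracket o1 o2 o3 i j k = _); last by rewrite !mul0r subr0 addr0.
apply: cvgD; first apply: cvgB; first exact: cvg_cst.
  exact: cvgM (cvg_pow0 1) (cvg_cst _).
exact: cvgM (cvg_pow0 3) (cvg_cst _).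
Qed.

Definition Utilde (b e : R) : 'M[R]_4 := mx4
  [:: [:: - (e ^+ 4 / b); 0; 0; 0];
      [:: 0; - e ^+ 3; 0; 0];
      [:: 0; 0; 0; e];
      [:: 0; 0; - b; 0]].

Definition Utilde_inv (b e : R) : 'M[R]_4 := mx4
  [:: [:: - (b / e ^+ 4); 0; 0; 0];
      [:: 0; - (e ^+ 3)^-1; 0; 0];
      [:: 0; 0; 0; - b^-1];
      [:: 0; 0; e^-1; 0]].

Lemma Utilde_mul_inv {b e : R} : b != 0 -> e != 0 -> Utilde b e *m Utilde_inv b e = 1%:M.
Proof.
move=> b0 e0; apply/matrixP => i j; rewrite !mxE !big_ord_recl big_ord0 !mxE.
move: i j => [[|[|[|[|//]]]] ?] [[|[|[|[|//]]]] ?]; rewrite /= ?mxE /=.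
all: by field; rewrite ?b0 ?e0.
Qed.

Lemma transform_Utilde (b e : R) i j k : b != 0 -> e != 0 ->
  transform (Utilde b e) c_so3A1 i j k =
  b * c_A31A1 i j k + e ^+ 6 / b * sc_bracket o0 o1 o3 i j k
  - e ^+ 2 / b * sc_bracket o0 o3 o1 i j k.
Proof.
move=> b0 e0; rewrite transform_so3A1 (mulmx1_invmx (Utilde_mul_inv b0 e0)).
move: i j k => [[|[|[|[|//]]]] ?] [[|[|[|[|//]]]] ?] [[|[|[|[|//]]]] ?].
all: rewrite !mxE /c_A31A1 /sc_bracket /sc_sub /sc_delta /=.
all: by field; rewrite ?b0 ?e0.
Qed.

Lemma W0DWt0E (e : R) : Wmx_of 1 0 *m Dmx e *m Wtmx_of 1 0 = Utilde (Kc e + 1 / 2) e.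
Proof.
have a_eq : Kc e - 1 / 2 = e ^+ 4 / (Kc e + 1 / 2) by rewrite -Kc_sqrB mulfK ?KcD_neq0.
apply/matrixP => i j; rewrite !mxE !big_ord_recl !big_ord0 !mxE ?big_ord_recl ?big_ord0 ?mxE.
by move: i j => [[|[|[|[|//]]]] ?] [[|[|[|[|//]]]] ?]; rewrite /= ?mxE /= ?a_eq; ring.
Qed.

Lemma contracts_W0DWt0 :
  contracts (fun e => Wmx_of 1 0 *m Dmx e *m Wtmx_of 1 0) c_so3A1 (@c_A31A1 R).
Proof.
have -> : (fun e => Wmx_of 1 0 *m Dmx e *m Wtmx_of 1 0) = fun e => Utilde (Kc e + 1 / 2) e.
  by apply/funext => e; exact: W0DWt0E.
have b1 : (fun e => Kc e + 1 / 2) @ 0^'+ --> (1 : R).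
  by rewrite [X in _ --> X](splitr 1); exact: cvgD cvg_Kc (cvg_cst _).
split=> [e /andP[e0 _]|i j k].
  exact: (mulmx1_unit (Utilde_mul_inv (KcD_neq0 e) (lt0r_neq0 e0))).1.
apply: (cvg_right0_eq (fun e e0 => transform_Utilde _ e i j k (KcD_neq0 e) (lt0r_neq0 e0))).
rewrite -[X in _ --> X](_ : 1 * c_A31A1 i j k + 0 * sc_bracket o0 o1 o3 i j k
  - 0 * sc_bracket o0 o3 o1 i j k = _); last by rewrite !mul0r subr0 addr0 mul1r.
apply: cvgB; first apply: cvgD; first exact: cvgM b1 (cvg_cst _).
  exact: cvgM (cvg_pow_div 5 (oner_neq0 _) b1) (cvg_cst _).
exact: cvgM (cvg_pow_div 1 (oner_neq0 _) b1) (cvg_cst _).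
Qed.

End Contractions.

Theorem mainTheorem7 (R : realType) :
  (forall e : R, 0 < e <= 1 ->
     [/\ Umx e = Wmx e *m Dmx e *m Wtmx e,
         Wmx e *m (Wmx e)^T = 1%:M & Wtmx e *m (Wtmx e)^T = 1%:M]) /\
  exists W0 Wt0 : 'M[R]_4,
    [/\ (forall i j : 'I_4, (fun e => Wmx e i j) @ 0^'+ --> W0 i j),
        (forall i j : 'I_4, (fun e => Wtmx e i j) @ 0^'+ --> Wt0 i j),
        W0 \in unitmx & Wt0 \in unitmx] /\
    [/\ contracts (@Umx R) c_so3A1 c_A41,
        contracts (fun e => W0 *m Dmx e *m Wt0) c_so3A1 c_A31A1
      & ~ lie_iso (@c_A31A1 R) c_A41].
Proof.
split=> [e _|].
  split; first exact: Umx_decomposition.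
    exact: Wmx_of_orthogonal (theta_sqrD e).
  exact: Wtmx_of_orthogonal (theta_sqrD e).
have unit_sqrD : (1 : R) ^+ 2 + 0 ^+ 2 = 1 by rewrite expr1n expr0n addr0.
exists (Wmx_of 1 0), (Wtmx_of 1 0); split; split.
- by move=> i j; exact: cvg_Wmx_of i j cvg_thp cvg_thm.
- by move=> i j; exact: cvg_Wtmx_of i j cvg_thp cvg_thm.
- exact: (mulmx1_unit (Wmx_of_orthogonal unit_sqrD)).1.
- exact: (mulmx1_unit (Wtmx_of_orthogonal unit_sqrD)).1.
- exact: contracts_Umx.
- exact: contracts_W0DWt0.
- exact: c_A31A1_not_iso_A41.
Qed.
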